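(* Let $m$ be a positive integer, $K\subseteq\mathbb{R}$, $\gamma:K\to\mathbb{H}$, $X\subseteq K$ with $\#X=m+1$, $a,b\in X$, and $p\in\mathbb{H}$. Then $$A[X,p*\gamma;a,b]=A[X,\gamma;a,b]\quad\text{and}\quad V[X,p*\gamma;a,b]=V[X,\gamma;a,b],$$ where $p*\gamma$ is the map $t\mapsto p*\gamma(t)$.
   Context: $\mathbb{H}$ is $\mathbb{R}^3$ with group law $(x,y,z)*(x',y',z')=(x+x',\,y+y',\,z+z'+2(yx'-xy'))$. For a set $X$ of $m+1$ distinct points and $\phi:X\to\mathbb{R}$, $P(X;\phi)$ denotes the unique polynomial of degree $\le m$ agreeing with $\phi$ on $X$ (Newton interpolation polynomial). For $\gamma=(f,g,h)$, $P_f=P(X;f)$, $P_g=P(X;g)$, and $a,b\in X$: $A[X,\gamma;a,b]=h(b)-h(a)-2\int_a^b(P_f'P_g-P_g'P_f)$, $V[X,\gamma;a,b]=\operatorname{diam}(X)^{2m}+\operatorname{diam}(X)^m\int_a^b(|P_f'|+|P_g'|)$. *)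

From Stdlib Require Import Reals Lra List.
From Coquelicot Require Import Coquelicot.
Open Scope R_scope.

Definition Heis : Type := (R * R * R)%type.
Definition hx (p : Heis) : R := fst (fst p).
Definition hy (p : Heis) : R := snd (fst p).
Definition hz (p : Heis) : R := snd p.
Definition hmul (p q : Heis) : Heis :=
  (hx p + hx q, hy p + hy q, hz p + hz q + 2 * (hy p * hx q - hx p * hy q)).

Definition hleft (p : Heis) (gam : R -> Heis) : R -> Heis :=
  fun t => hmul p (gam t).

(** Newton divided differences of phi on the nodes xs = [x_0; ...; x_m]:
    dd xs phi n i = phi[x_i, ..., x_{i+n}]. *)
Fixpoint dd (xs : list R) (phi : R -> R) (n i : nat) : R :=
  match n with
  | O => phi (nth i xs 0)
  | S n' => (dd xs phi n' (S i) - dd xs phi n' i)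
            / (nth (i + S n') xs 0 - nth i xs 0)
  end.

Fixpoint nprod (xs : list R) (t : R) (k : nat) : R :=
  match k with
  | O => 1
  | S k' => nprod xs t k' * (t - nth k' xs 0)
  end.

Definition newton (xs : list R) (phi : R -> R) (t : R) : R :=
  sum_f_R0 (fun k => dd xs phi k 0 * nprod xs t k) (pred (length xs)).

Definition diam (xs : list R) : R :=
  fold_right (fun x acc =>
    fold_right (fun y acc' => Rmax (Rabs (x - y)) acc') acc xs) 0 xs.

Definition Aq (xs : list R) (gam : R -> Heis) (a b : R) : R :=
  let Pf := newton xs (fun t => hx (gam t)) in
  let Pg := newton xs (fun t => hy (gam t)) in
  hz (gam b) - hz (gam a)
  - 2 * RInt (fun t => Derive Pf t * Pg t - Derive Pg t * Pf t) a b.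

Definition Vq (xs : list R) (gam : R -> Heis) (a b : R) : R :=
  let m := pred (length xs) in
  let Pf := newton xs (fun t => hx (gam t)) in
  let Pg := newton xs (fun t => hy (gam t)) in
  diam xs ^ (2 * m)
  + diam xs ^ m * RInt (fun t => Rabs (Derive Pf t) + Rabs (Derive Pg t)) a b.

From Stdlib Require Import Reals List Lra Lia FunctionalExtensionality.
From Coquelicot Require Import Coquelicot.
Open Scope R_scope.

(** Left translation by [p] adds the constants [hx p] and [hy p] to the first
    two coordinates of the curve.  Newton interpolation reproduces constants,
    so [P_f] and [P_g] are shifted by these constants and their derivatives,
    hence [V], are unchanged.  In [A] the shift adds
    [2 (hy p (P_f b - P_f a) - hx p (P_g b - P_g a))] to the integral by the
    fundamental theorem of calculus; as [P_f] and [P_g] interpolate at the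
    nodes [a] and [b], this equals the change
    [2 (hy p (f b - f a) - hx p (g b - g a))] of the increment of the third
    coordinate. *)

Lemma Derive_addC (c : R) (f : R -> R) :
  Derive (fun t => c + f t) = Derive f.
Proof.
  apply functional_extensionality; intro t; unfold Derive; f_equal.
  apply Lim_ext; intro h; f_equal; ring.
Qed.

Inductive poly_fun : (R -> R) -> Prop :=
| poly_fun_const (c : R) : poly_fun (fun _ => c)
| poly_fun_id : poly_fun (fun t => t)
| poly_fun_plus (f g : R -> R) :
    poly_fun f -> poly_fun g -> poly_fun (fun t => f t + g t)
| poly_fun_mult (f g : R -> R) :
    poly_fun f -> poly_fun g -> poly_fun (fun t => f t * g t).

Lemma poly_fun_subC (c : R) : poly_fun (fun t => t - c).
Proof. exact (poly_fun_plus _ (fun _ => - c) poly_fun_id (poly_fun_const _)). Qed.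

Lemma poly_fun_sum (F : nat -> R -> R) (n : nat) :
  (forall k, poly_fun (F k)) -> poly_fun (fun t => sum_f_R0 (fun k => F k t) n).
Proof.
  intro HF; induction n as [|n IHn]; simpl.
  - apply HF.
  - exact (poly_fun_plus _ (F (S n)) IHn (HF _)).
Qed.

Lemma poly_fun_is_derive (f : R -> R) :
  poly_fun f -> exists df, poly_fun df /\ forall t, is_derive f t (df t).
Proof.
  induction 1 as [c | | g h _ [dg [Pdg Dg]] _ [dh [Pdh Dh]]
                 | g h Pg [dg [Pdg Dg]] Ph [dh [Pdh Dh]]].
  - exists (fun _ => 0); split; [apply poly_fun_const | intro t; exact (is_derive_const c t)].
  - exists (fun _ => 1); split; [apply poly_fun_const | intro t; exact (is_derive_id t)].
  - exists (fun t => dg t + dh t); split.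
    + now apply poly_fun_plus.
    + intro t; exact (is_derive_plus g h t _ _ (Dg t) (Dh t)).
  - exists (fun t => dg t * h t + g t * dh t); split.
    + apply poly_fun_plus; now apply poly_fun_mult.
    + intro t; exact (is_derive_mult g h t _ _ (Dg t) (Dh t) Rmult_comm).
Qed.

Lemma poly_fun_ex_derive (f : R -> R) (t : R) : poly_fun f -> ex_derive f t.
Proof. intro Pf; destruct (poly_fun_is_derive f Pf) as [df [_ Df]]; now exists (df t). Qed.

Lemma poly_fun_Derive (f : R -> R) : poly_fun f -> poly_fun (Derive f).
Proof.
  intro Pf; destruct (poly_fun_is_derive f Pf) as [df [Pdf Df]].
  replace (Derive f) with df; [exact Pdf |].
  apply functional_extensionality; intro t; symmetry; now apply is_derive_unique.
Qed.

Lemma poly_fun_continuous (f : R -> R) (t : R) : poly_fun f -> continuous f t.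
Proof. intro Pf; exact (ex_derive_continuous f t (poly_fun_ex_derive f t Pf)). Qed.

Definition C1 (f : R -> R) : Prop :=
  forall t, ex_derive f t /\ continuous (Derive f) t.

Lemma poly_fun_C1 (f : R -> R) : poly_fun f -> C1 f.
Proof.
  intros Pf t; split.
  - now apply poly_fun_ex_derive.
  - apply poly_fun_continuous, poly_fun_Derive, Pf.
Qed.

Lemma C1_continuous (f : R -> R) (t : R) : C1 f -> continuous f t.
Proof. intro Hf; exact (ex_derive_continuous f t (proj1 (Hf t))). Qed.

Lemma is_RInt_Derive_C1 (f : R -> R) (a b : R) :
  C1 f -> is_RInt (Derive f) a b (f b - f a).
Proof.
  intro Hf; apply (is_RInt_derive f (Derive f)); intros t _.
  - apply Derive_correct, Hf.
  - apply Hf.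
Qed.

Lemma RInt_cross_addC (P Q : R -> R) (u v a b : R) : C1 P -> C1 Q ->
  RInt (fun t => Derive P t * (v + Q t) - Derive Q t * (u + P t)) a b =
  RInt (fun t => Derive P t * Q t - Derive Q t * P t) a b
  + (v * (P b - P a) - u * (Q b - Q a)).
Proof.
  intros HP HQ.
  set (cross := fun t => Derive P t * Q t - Derive Q t * P t).
  assert (Hcross : ex_RInt cross a b).
  { apply (ex_RInt_continuous (V := R_CompleteNormedModule)); intros t _; unfold cross.
    apply (continuous_minus (fun t => Derive P t * Q t) (fun t => Derive Q t * P t)).
    - exact (continuous_mult _ _ t (proj2 (HP t)) (C1_continuous Q t HQ)).
    - exact (continuous_mult _ _ t (proj2 (HQ t)) (C1_continuous P t HP)). }
  apply is_RInt_unique.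
  apply (is_RInt_ext (fun t => cross t + (v * Derive P t - u * Derive Q t))).
  { intros t _; unfold cross; simpl; ring. }
  apply (is_RInt_plus cross); [exact (RInt_correct (V := R_CompleteNormedModule) cross a b Hcross) |].
  apply (is_RInt_minus (fun t => v * Derive P t) (fun t => u * Derive Q t));
    apply (is_RInt_scal (V := R_NormedModule)); now apply is_RInt_Derive_C1.
Qed.

Definition newton_upto (xs : list R) (phi : R -> R) (n : nat) (t : R) : R :=
  sum_f_R0 (fun k => dd xs phi k 0 * nprod xs t k) n.

Lemma newton_upto_succ (xs : list R) (phi : R -> R) (n : nat) (t : R) :
  newton_upto xs phi (S n) t
  = newton_upto xs phi n t + dd xs phi (S n) 0 * nprod xs t (S n).
Proof. reflexivity. Qed.

Lemma dd_succ (xs : list R) (phi : R -> R) (n i : nat) :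
  dd xs phi (S n) i
  = (dd xs phi n (S i) - dd xs phi n i) / (nth (i + S n) xs 0 - nth i xs 0).
Proof. reflexivity. Qed.

Lemma dd_cons (y : R) (xs : list R) (phi : R -> R) (n i : nat) :
  dd (y :: xs) phi n (S i) = dd xs phi n i.
Proof.
  revert i; induction n as [|n IHn]; intro i; [reflexivity |].
  rewrite !dd_succ, !IHn; reflexivity.
Qed.

Lemma dd_cons_succ (y : R) (xs : list R) (phi : R -> R) (n : nat) :
  nth n xs 0 <> y ->
  dd (y :: xs) phi (S n) 0 * (nth n xs 0 - y) = dd xs phi n 0 - dd (y :: xs) phi n 0.
Proof.
  intro Hy; rewrite dd_succ, dd_cons; simpl.
  field; intro E; apply Hy, Rminus_diag_uniq, E.
Qed.

Lemma nprod_cons (y : R) (xs : list R) (t : R) (k : nat) :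
  nprod (y :: xs) t (S k) = (t - y) * nprod xs t k.
Proof.
  induction k as [|k IHk]; simpl in *; [ring |].
  rewrite IHk; ring.
Qed.

Lemma nprod_node (xs : list R) (j k : nat) :
  (j < k)%nat -> nprod xs (nth j xs 0) k = 0.
Proof.
  induction k as [|k IHk]; intro Hjk; [lia |]; simpl.
  destruct (Nat.eq_dec j k) as [-> | Hne]; [ring |].
  rewrite IHk by lia; ring.
Qed.

Lemma newton_upto_cons_diff (y : R) (xs : list R) (phi : R -> R) (n : nat) (t : R) :
  ~ In y xs -> (n < length xs)%nat ->
  newton_upto xs phi n t - newton_upto (y :: xs) phi n t
  = (dd xs phi n 0 - dd (y :: xs) phi n 0) * nprod xs t n.
Proof.
  intro Hy; induction n as [|n IHn]; intro Hn.
  - unfold newton_upto; simpl; ring.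
  - assert (Hxn : nth n xs 0 <> y) by (intros <-; apply Hy, nth_In; lia).
    assert (IH : newton_upto xs phi n t
                 = newton_upto (y :: xs) phi n t
                   + dd (y :: xs) phi (S n) 0 * (nth n xs 0 - y) * nprod xs t n).
    { rewrite dd_cons_succ by exact Hxn; rewrite <- IHn by lia; ring. }
    rewrite !newton_upto_succ, IH, nprod_cons.
    change (nprod xs t (S n)) with (nprod xs t n * (t - nth n xs 0)).
    ring.
Qed.

Lemma newton_upto_interp (phi : R -> R) (n : nat) (xs : list R) (j : nat) :
  NoDup xs -> (n < length xs)%nat -> (j <= n)%nat ->
  newton_upto xs phi n (nth j xs 0) = phi (nth j xs 0).
Proof.
  revert xs j; induction n as [|n IHn]; intros xs j Hnd Hn Hj.
  - replace j with 0%nat by lia; unfold newton_upto; simpl; ring.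
  - destruct xs as [|y ys]; [simpl in Hn; lia |].
    destruct (proj1 (NoDup_cons_iff y ys) Hnd) as [Hy Hnd'].
    simpl in Hn; rewrite newton_upto_succ.
    destruct (Nat.eq_dec j (S n)) as [-> | Hne].
    + (* [newton_upto (y :: ys) (S n)] and [newton_upto ys n] differ by a
         multiple of [t - nth n ys 0]. *)
      change (nth (S n) (y :: ys) 0) with (nth n ys 0).
      assert (Hxn : nth n ys 0 <> y) by (intros <-; apply Hy, nth_In; lia).
      pose proof (newton_upto_cons_diff y ys phi n (nth n ys 0) Hy ltac:(lia)) as D.
      rewrite <- dd_cons_succ in D by exact Hxn.
      rewrite nprod_cons, <- (IHn ys n) by (auto; lia).
      lra.
    + rewrite nprod_node, IHn by (auto; simpl; lia); ring.
Qed.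

Lemma newton_interp (xs : list R) (phi : R -> R) (x : R) :
  NoDup xs -> In x xs -> newton xs phi x = phi x.
Proof.
  intros Hnd Hx; destruct (In_nth xs x 0 Hx) as [j [Hj <-]].
  apply (newton_upto_interp phi (pred (length xs)) xs j); auto; lia.
Qed.

Lemma dd_addC (xs : list R) (phi : R -> R) (c : R) (n i : nat) :
  dd xs (fun t => c + phi t) (S n) i = dd xs phi (S n) i.
Proof.
  revert i; induction n as [|n IHn]; intro i.
  - rewrite !dd_succ; simpl; f_equal; ring.
  - rewrite (dd_succ xs (fun t => c + phi t) (S n)), (dd_succ xs phi (S n)), !IHn.
    reflexivity.
Qed.

Lemma newton_addC (xs : list R) (phi : R -> R) (c : R) :
  newton xs (fun t => c + phi t) = (fun t => c + newton xs phi t).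
Proof.
  apply functional_extensionality; intro t.
  change (newton_upto xs (fun t => c + phi t) (pred (length xs)) t
          = c + newton_upto xs phi (pred (length xs)) t).
  induction (pred (length xs)) as [|n IHn].
  - unfold newton_upto; simpl; ring.
  - rewrite !newton_upto_succ, IHn, dd_addC; ring.
Qed.

Lemma poly_fun_nprod (xs : list R) (k : nat) : poly_fun (fun t => nprod xs t k).
Proof.
  induction k as [|k IHk].
  - exact (poly_fun_const 1).
  - exact (poly_fun_mult _ _ IHk (poly_fun_subC _)).
Qed.

Lemma newton_poly_fun (xs : list R) (phi : R -> R) : poly_fun (newton xs phi).
Proof.
  apply (poly_fun_sum (fun k t => dd xs phi k 0 * nprod xs t k)); intro k.
  exact (poly_fun_mult _ _ (poly_fun_const _) (poly_fun_nprod xs k)).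
Qed.

Theorem lemma4p3 (m : nat) (K : R -> Prop) (gam : R -> Heis)
  (xs : list R) (a b : R) (p : Heis) :
  (0 < m)%nat ->
  NoDup xs -> length xs = S m -> (forall x, In x xs -> K x) ->
  In a xs -> In b xs ->
  Aq xs (hleft p gam) a b = Aq xs gam a b /\
  Vq xs (hleft p gam) a b = Vq xs gam a b.
Proof.
  intros _ Hnd _ _ Ha Hb.
  unfold Aq, Vq; cbv zeta.
  change (fun t => hx (hleft p gam t)) with (fun t => hx p + hx (gam t)).
  change (fun t => hy (hleft p gam t)) with (fun t => hy p + hy (gam t)).
  rewrite !newton_addC, !Derive_addC.
  split; [| reflexivity].
  rewrite RInt_cross_addC by apply poly_fun_C1, newton_poly_fun.
  rewrite !(newton_interp xs _ a Hnd Ha), !(newton_interp xs _ b Hnd Hb).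
  unfold hleft, hmul, hx, hy, hz; simpl; ring.
Qed.
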